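(* Let $C$ be a contractible globular extension equipped with a pregroupoidal structure and let $G$ be an $\infty$-groupoid of type $C$. For every $n\ge 0$, the relation $\sim$ on $G_n$ is an equivalence relation. Moreover, for $n\ge 1$, if $u\sim u'$ and $v\sim v'$ are $n$-arrows with $s(v)=t(u)$ (hence $s(v')=t(u')$), then $v\ast^n_{n-1}u\sim v'\ast^n_{n-1}u'$.
   Context: Globe category and globular extensions: The globe category $\mathbb{G}$ is the category with objects $D_n$ ($n\ge 0$), generated by morphisms $\sigma_n,\tau_n\colon D_{n-1}\to D_n$ ($n\ge 1$) subject to $\sigma_{n+1}\sigma_n=\tau_{n+1}\sigma_n$ and $\sigma_{n+1}\tau_n=\tau_{n+1}\tau_n$. For $i\ge j\ge 0$ put $\sigma^i_j=\sigma_i\cdots\sigma_{j+1}$ and $\tau^i_j=\tau_i\cdots\tau_{j+1}\colon D_j\to D_i$. A table of dimensions of width $n\ge 1$ consists of integers $i_1,\dots,i_n,i'_1,\dots,i'_{n-1}\ge 0$ with $i_k>i'_k$ and $i_{k+1}>i'_k$; its dimension is the largest integer occurring in it. If $C$ is a category with a functor $\mathbb{G}\to C$, the globular sum associated to such a table is the colimit in $C$ (if it exists) of the zig-zag $D_{i_1}\xleftarrow{\sigma^{i_1}_{i'_1}}D_{i'_1}\xrightarrow{\tau^{i_2}_{i'_1}}D_{i_2}\leftarrow\cdots\leftarrow D_{i'_{n-1}}\xrightarrow{\tau^{i_n}_{i'_{n-1}}}D_{i_n}$, written $D_{i_1}\amalg_{D_{i'_1}}\cdots\amalg_{D_{i'_{n-1}}}D_{i_n}$;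 its dimension is that of the table. A globular extension is a category $C$ with a functor $\mathbb{G}\to C$ in which all globular sums exist. Two morphisms $f,g\colon D_n\to X$ are globularly parallel if $n=0$, or $f\sigma_n=g\sigma_n$ and $f\tau_n=g\tau_n$. A lifting of $(f,g)$ is $h\colon D_{n+1}\to X$ with $h\sigma_{n+1}=f$, $h\tau_{n+1}=g$. A pair $(f,g)\colon D_n\to S$ is admissible if $f,g$ are globularly parallel and $S$ is a globular sum of dimension at most $n+1$; $C$ is contractible if every admissible pair admits a lifting. $\infty$-groupoids: For $C$ a contractible globular extension, an $\infty$-groupoid of type $C$ is a presheaf $G$ on $C$ such that for every table of dimensions the canonical map $G(D_{i_1}\amalg_{D_{i'_1}}\cdots\amalg_{D_{i'_{n-1}}}D_{i_n})\to G_{i_1}\times_{G_{i'_1}}\cdots\times_{G_{i'_{n-1}}}G_{i_n}$ is a bijection; here $G_i=G(D_i)$ is the set of $i$-arrows, the source and target of an $i$-arrow $u$ ($i\ge1$) are $s(u)=G(\sigma_i)(u)$ and $t(u)=G(\tau_i)(u)$, $s^i_j=G(\sigma^i_j)$, $t^i_j=G(\tau^i_j)$, and the fiber product consists of tuples $(u_1,\dots,u_n)$ with $s^{i_k}_{i'_k}(u_k)=t^{i_{k+1}}_{i'_k}(u_{k+1})$. Morphisms are natural transformations. Two $i$-arrows are parallel if $i=0$ or they have the same source and target. Pregroupoidal structure: morphisms $\nabla^i_j\colon D_i\to D_i\amalg_{D_j}D_i$ ($i>j\ge 0$), $\kappa_i\colon D_{i+1}\to D_i$ ($i\ge 0$),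 $w^i_j\colon D_i\to D_i$ ($i>j\ge0$) of $C$ such that $\nabla^i_{i-1}\sigma_i=\epsilon_2\sigma_i$ and $\nabla^i_{i-1}\tau_i=\epsilon_1\tau_i$ (with $\epsilon_1,\epsilon_2\colon D_i\to D_i\amalg_{D_{i-1}}D_i$ the canonical morphisms to the first and second summand), $\nabla^i_j\sigma_i=(\sigma_i\amalg_{D_j}\sigma_i)\nabla^{i-1}_j$ and $\nabla^i_j\tau_i=(\tau_i\amalg_{D_j}\tau_i)\nabla^{i-1}_j$ for $j<i-1$, $\kappa_i\sigma_{i+1}=\kappa_i\tau_{i+1}=\mathrm{id}_{D_i}$, $w^i_{i-1}\sigma_i=\tau_i$, $w^i_{i-1}\tau_i=\sigma_i$, and $w^i_j\sigma_i=\sigma_iw^{i-1}_j$, $w^i_j\tau_i=\tau_iw^{i-1}_j$ for $j<i-1$ (such a structure exists on every contractible globular extension). On an $\infty$-groupoid $G$ of type $C$ this induces compositions $\ast^i_j$: for $i$-arrows $v,u$ with $s^i_j(v)=t^i_j(u)$, $v\ast^i_ju=G(\nabla^i_j)(\xi)$ where $\xi\in G(D_i\amalg_{D_j}D_i)$ corresponds to $(v,u)$ under the canonical bijection with $G_i\times_{G_j}G_i$; units $k_i=G(\kappa_i)\colon G_i\to G_{i+1}$ with $k^i_j=k_{i-1}\cdots k_j$; inverses $G(w^i_j)$. Homotopy: for $n$-arrows $u,v$ of $G$, $u\sim v$ means there is an $(n+1)$-arrow with source $u$ and target $v$. *)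

From Stdlib Require Import Arith PeanoNat RelationClasses.

Set Implicit Arguments.
Unset Strict Implicit.

Record Cat := {
  Ob :> Type;
  Hom : Ob -> Ob -> Type;
  cmp : forall a b c0 : Ob, Hom b c0 -> Hom a b -> Hom a c0;
  idm : forall a : Ob, Hom a a;
  cmpA : forall a b c d (h : Hom c d) (g : Hom b c) (f : Hom a b),
      cmp h (cmp g f) = cmp (cmp h g) f;
  cmp_idl : forall a b (f : Hom a b), cmp (idm b) f = f;
  cmp_idr : forall a b (f : Hom a b), cmp f (idm a) = f
}.
Arguments Hom {_} _ _.
Arguments cmp {_ _ _ _} _ _.
Arguments idm {_} _.
Notation "g \o' f" := (cmp g f) (at level 40, left associativity).

(* A functor G -> C is exactly the data of objects D_n and morphisms
   sg n = sigma_{n+1}, tg n = tau_{n+1} : D_n -> D_{n+1}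
   satisfying the globular relations (G is presented by generators and
   relations). *)
Record GlobeFun (C : Cat) := {
  D : nat -> Ob C;
  sg : forall n, Hom (D n) (D (S n));
  tg : forall n, Hom (D n) (D (S n));
  glob_s : forall n, sg (S n) \o' sg n = tg (S n) \o' sg n;
  glob_t : forall n, sg (S n) \o' tg n = tg (S n) \o' tg n
}.
Arguments D {C} g n.
Arguments sg {C} g n.
Arguments tg {C} g n.

Section Iter.
Variable C : Cat.
Variable g : GlobeFun C.

Fixpoint sigk (j k : nat) : Hom (D g j) (D g (k + j)) :=
  match k with
  | 0 => idm _
  | S k' => sg g (k' + j) \o' sigk j k'
  end.
Fixpoint tauk (j k : nat) : Hom (D g j) (D g (k + j)) :=
  match k with
  | 0 => idm _
  | S k' => tg g (k' + j) \o' tauk j k'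
  end.

Definition sig_ij (i j : nat) (H : j <= i) : Hom (D g j) (D g i) :=
  eq_rect (i - j + j) (fun m => Hom (D g j) (D g m)) (sigk j (i - j)) i
          (Nat.sub_add j i H).
Definition tau_ij (i j : nat) (H : j <= i) : Hom (D g j) (D g i) :=
  eq_rect (i - j + j) (fun m => Hom (D g j) (D g m)) (tauk j (i - j)) i
          (Nat.sub_add j i H).
End Iter.

(* A table of width n = tw+1 : i_{k+1} = ti k (k <= tw),
   i'_{k+1} = ti' k (k < tw); values outside these ranges are irrelevant. *)
Record table := {
  tw : nat;
  ti : nat -> nat;
  ti' : nat -> nat;
  tok1 : forall k, k < tw -> ti' k < ti k;
  tok2 : forall k, k < tw -> ti' k < ti (S k)
}.

Fixpoint maxupto (f : nat -> nat) (m : nat) : nat :=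
  match m with 0 => f 0 | S m' => Nat.max (maxupto f m') (f (S m')) end.

Definition tdim (T : table) : nat :=
  Nat.max (maxupto (ti T) (tw T))
          (match tw T with 0 => 0 | S m => maxupto (ti' T) m end).

Section Colim.
Variable C : Cat.
Variable g : GlobeFun C.
Variable T : table.

Definition dsig (k : nat) (Hk : k < tw T) : Hom (D g (ti' T k)) (D g (ti T k)) :=
  sig_ij g (Nat.lt_le_incl _ _ (@tok1 T k Hk)).
Definition dtau (k : nat) (Hk : k < tw T) :
    Hom (D g (ti' T k)) (D g (ti T (S k))) :=
  tau_ij g (Nat.lt_le_incl _ _ (@tok2 T k Hk)).

(* cocones over the zig-zag D_{i_1} <- D_{i'_1} -> D_{i_2} <- ... -> D_{i_n} *)
Definition cocone (Z : Ob C) (z : forall k, Hom (D g (ti T k)) Z) : Prop :=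
  forall k (Hk : k < tw T), z k \o' dsig Hk = z (S k) \o' dtau Hk.

Definition IsColimit (S : Ob C) (e : forall k, Hom (D g (ti T k)) S) : Prop :=
  cocone e /\
  forall (Z : Ob C) (z : forall k, Hom (D g (ti T k)) Z), cocone z ->
    exists h : Hom S Z,
      (forall k, k <= tw T -> h \o' e k = z k) /\
      (forall h' : Hom S Z, (forall k, k <= tw T -> h' \o' e k = z k) -> h' = h).
End Colim.

Record GlobExt := {
  GC : Cat;
  glob : GlobeFun GC;
  gsum : table -> Ob GC;
  ginj : forall T k, Hom (D glob (ti T k)) (gsum T);
  gcolim : forall T, @IsColimit GC glob T (gsum T) (ginj T)
}.

Definition gpar (E : GlobExt) (X : Ob (GC E)) (n : nat) :
    Hom (D (glob E) n) X -> Hom (D (glob E) n) X -> Prop :=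
  match n return Hom (D (glob E) n) X -> Hom (D (glob E) n) X -> Prop with
  | 0 => fun _ _ => True
  | S m => fun f g => f \o' sg (glob E) m = g \o' sg (glob E) m /\
                      f \o' tg (glob E) m = g \o' tg (glob E) m
  end.

Definition Contractible (E : GlobExt) : Prop :=
  forall (n : nat) (T : table) (S : Ob (GC E))
         (e : forall k, Hom (D (glob E) (ti T k)) S),
    @IsColimit (GC E) (glob E) T S e -> tdim T <= Datatypes.S n ->
    forall f g : Hom (D (glob E) n) S, @gpar E S n f g ->
      exists h : Hom (D (glob E) (Datatypes.S n)) S,
        h \o' sg (glob E) n = f /\ h \o' tg (glob E) n = g.

(* the table (i, i ; j), giving D_i \amalg_{D_j} D_i *)
Definition table2 (i j : nat) (H : j < i) : table :=
  {| tw := 1; ti := fun _ => i; ti' := fun _ => j;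
     tok1 := fun _ _ => H; tok2 := fun _ _ => H |}.

Record Pregroupoidal (E : GlobExt) := {
  nab : forall i j (H : j < i), Hom (D (glob E) i) (gsum E (table2 H));
  kap : forall i, Hom (D (glob E) (S i)) (D (glob E) i);
  wi : forall i j, j < i -> Hom (D (glob E) i) (D (glob E) i);
  nab_top_s : forall m (H : m < S m),
      nab H \o' sg (glob E) m = ginj E (table2 H) 1 \o' sg (glob E) m;
  nab_top_t : forall m (H : m < S m),
      nab H \o' tg (glob E) m = ginj E (table2 H) 0 \o' tg (glob E) m;
  (* h below is sigma_i \amalg_{D_j} sigma_i (resp. tau), characterised by
     its universal property *)
  nab_low_s : forall m j (H : j < m) (H1 : j < S m)
      (h : Hom (gsum E (table2 H)) (gsum E (table2 H1))),
      h \o' ginj E (table2 H) 0 = ginj E (table2 H1) 0 \o' sg (glob E) m ->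
      h \o' ginj E (table2 H) 1 = ginj E (table2 H1) 1 \o' sg (glob E) m ->
      nab H1 \o' sg (glob E) m = h \o' nab H;
  nab_low_t : forall m j (H : j < m) (H1 : j < S m)
      (h : Hom (gsum E (table2 H)) (gsum E (table2 H1))),
      h \o' ginj E (table2 H) 0 = ginj E (table2 H1) 0 \o' tg (glob E) m ->
      h \o' ginj E (table2 H) 1 = ginj E (table2 H1) 1 \o' tg (glob E) m ->
      nab H1 \o' tg (glob E) m = h \o' nab H;
  kap_s : forall i, kap i \o' sg (glob E) i = idm _;
  kap_t : forall i, kap i \o' tg (glob E) i = idm _;
  w_top_s : forall m (H : m < S m), wi H \o' sg (glob E) m = tg (glob E) m;
  w_top_t : forall m (H : m < S m), wi H \o' tg (glob E) m = sg (glob E) m;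
  w_low_s : forall m j (H : j < m) (H1 : j < S m),
      wi H1 \o' sg (glob E) m = sg (glob E) m \o' wi H;
  w_low_t : forall m j (H : j < m) (H1 : j < S m),
      wi H1 \o' tg (glob E) m = tg (glob E) m \o' wi H
}.

Record Presheaf (C : Cat) := {
  PO : Ob C -> Type;
  pmap : forall a b : Ob C, Hom a b -> PO b -> PO a;
  pmap_id : forall a (x : PO a), pmap (idm a) x = x;
  pmap_cmp : forall a b c (g : Hom b c) (f : Hom a b) (x : PO c),
      pmap (g \o' f) x = pmap f (pmap g x)
}.
Arguments pmap {C} p {a b} _ _.

(* The canonical map G(globular sum) -> fibre product is a bijection. *)
Definition IsInfGroupoid (E : GlobExt) (G : Presheaf (GC E)) : Prop :=
  forall T : table,
    (forall x y : PO G (gsum E T),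
        (forall k, k <= tw T -> pmap G (ginj E T k) x = pmap G (ginj E T k) y) ->
        x = y) /\
    (forall u : forall k, PO G (D (glob E) (ti T k)),
        (forall k (Hk : k < tw T),
            pmap G (@dsig _ (glob E) T k Hk) (u k) = pmap G (@dtau _ (glob E) T k Hk) (u (S k))) ->
        exists x : PO G (gsum E T),
          forall k, k <= tw T -> pmap G (ginj E T k) x = u k).

Definition htpy (E : GlobExt) (G : Presheaf (GC E)) (n : nat)
    (u v : PO G (D (glob E) n)) : Prop :=
  exists a : PO G (D (glob E) (S n)),
    pmap G (sg (glob E) n) a = u /\ pmap G (tg (glob E) n) a = v.

(* w = v *^{m+1}_m u : w = G(nabla^{m+1}_m)(xi) where xi corresponds to (v,u) *)
Definition is_comp (E : GlobExt) (PG : Pregroupoidal E) (G : Presheaf (GC E))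
    (m : nat) (v u w : PO G (D (glob E) (S m))) : Prop :=
  exists xi : PO G (gsum E (table2 (Nat.lt_succ_diag_r m))),
    pmap G (ginj E (table2 (Nat.lt_succ_diag_r m)) 0) xi = v /\
    pmap G (ginj E (table2 (Nat.lt_succ_diag_r m)) 1) xi = u /\
    pmap G (nab PG (Nat.lt_succ_diag_r m)) xi = w.

From Stdlib Require Import Arith PeanoNat RelationClasses Lia.

Set Implicit Arguments.
Unset Strict Implicit.

(* Reflexivity, symmetry and transitivity of ~ on G_n are witnessed by the
   units kappa_n, the top inverses w^{n+1}_n and the top composition
   nabla^{n+1}_n respectively.  For compatibility with *^{m+1}_m, given
   homotopies a : u ~ u' and b : v ~ v' we glue (b, a) into an element of
   G(D_{m+2} amalg_{D_m} D_{m+2}) and compose with nabla^{m+2}_m; the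
   compatibility of nabla^i_j (j < i-1) with sources and targets shows that
   the source of the result is v *^{m+1}_m u and its target v' *^{m+1}_m u'. *)

Section IteratedGlobeMaps.
Context {C : Cat} {g : GlobeFun C}.

Lemma sig_ij_sigk j k (H : j <= k + j) : sig_ij g H = sigk g j k.
Proof.
  unfold sig_ij. generalize (Nat.sub_add j (k + j) H).
  rewrite (Nat.add_sub k j). intro p.
  rewrite (Eqdep_dec.UIP_refl_nat _ p). reflexivity.
Qed.

Lemma tau_ij_tauk j k (H : j <= k + j) : tau_ij g H = tauk g j k.
Proof.
  unfold tau_ij. generalize (Nat.sub_add j (k + j) H).
  rewrite (Nat.add_sub k j). intro p.
  rewrite (Eqdep_dec.UIP_refl_nat _ p). reflexivity.
Qed.

Lemma sig_ij_succ j m (H : j <= m) (H' : j <= S m) :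
  sig_ij g H' = sg g m \o' sig_ij g H.
Proof.
  destruct (Nat.le_exists_sub j m H) as [k [Hm _]]; subst m.
  rewrite (sig_ij_sigk H). exact (sig_ij_sigk (k := S k) H').
Qed.

Lemma tau_ij_succ j m (H : j <= m) (H' : j <= S m) :
  tau_ij g H' = tg g m \o' tau_ij g H.
Proof.
  destruct (Nat.le_exists_sub j m H) as [k [Hm _]]; subst m.
  rewrite (tau_ij_tauk H). exact (tau_ij_tauk (k := S k) H').
Qed.

(* By the globular relations, for j < m the maps sigma_{m+1} and tau_{m+1}
   agree on the image of tau^m_j, resp. sigma^m_j. *)
Lemma tau_ij_succ_sg j m (H : j < m) (H0 : j <= m) (H' : j <= S m) :
  tau_ij g H' = sg g m \o' tau_ij g H0.
Proof.
  destruct m as [|m]; [lia|].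
  assert (Hm : j <= m) by lia.
  rewrite (tau_ij_succ H0 H'), (tau_ij_succ Hm H0), !cmpA, glob_t.
  reflexivity.
Qed.

Lemma sig_ij_succ_tg j m (H : j < m) (H0 : j <= m) (H' : j <= S m) :
  sig_ij g H' = tg g m \o' sig_ij g H0.
Proof.
  destruct m as [|m]; [lia|].
  assert (Hm : j <= m) by lia.
  rewrite (sig_ij_succ H0 H'), (sig_ij_succ Hm H0), !cmpA, glob_s.
  reflexivity.
Qed.

Lemma sig_ij_diag j (H : j <= S j) : sig_ij g H = sg g j.
Proof. exact (eq_trans (sig_ij_sigk (k := 1) H) (cmp_idr _)). Qed.

Lemma tau_ij_diag j (H : j <= S j) : tau_ij g H = tg g j.
Proof. exact (eq_trans (tau_ij_tauk (k := 1) H) (cmp_idr _)). Qed.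

End IteratedGlobeMaps.

Section BinarySums.
Variable E : GlobExt.

Notation sigE := (sig_ij (glob E)).
Notation tauE := (tau_ij (glob E)).

Lemma table2_cocone i j (H : j < i) :
  ginj E (table2 H) 0 \o' sigE (Nat.lt_le_incl _ _ H)
  = ginj E (table2 H) 1 \o' tauE (Nat.lt_le_incl _ _ H).
Proof. exact (proj1 (gcolim E (table2 H)) 0 Nat.lt_0_1). Qed.

Lemma table2_copair i j (H : j < i) (Z : Ob (GC E)) (f0 f1 : Hom (D (glob E) i) Z) :
  f0 \o' sigE (Nat.lt_le_incl _ _ H) = f1 \o' tauE (Nat.lt_le_incl _ _ H) ->
  exists h : Hom (gsum E (table2 H)) Z,
    h \o' ginj E (table2 H) 0 = f0 /\ h \o' ginj E (table2 H) 1 = f1.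
Proof.
  intro Hf.
  destruct (proj2 (gcolim E (table2 H)) Z
              (fun k => match k with 0 => f0 | _ => f1 end)) as [h [Hh _]].
  - intros k Hk. destruct k; [exact Hf | simpl in Hk; lia].
  - exists h. split; [exact (Hh 0 (Nat.le_0_l _)) | exact (Hh 1 (le_n 1))].
Qed.

Variables (G : Presheaf (GC E)) (HG : IsInfGroupoid G).

Lemma glue2_unique i j (H : j < i) (x y : PO G (gsum E (table2 H))) :
  pmap G (ginj E (table2 H) 0) x = pmap G (ginj E (table2 H) 0) y ->
  pmap G (ginj E (table2 H) 1) x = pmap G (ginj E (table2 H) 1) y ->
  x = y.
Proof.
  intros H0 H1. apply (proj1 (HG (table2 H))). intros k Hk.
  destruct k as [|[|k]]; [exact H0 | exact H1 | simpl in Hk; lia].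
Qed.

Lemma glue2 i j (H : j < i) (v u : PO G (D (glob E) i)) :
  pmap G (sigE (Nat.lt_le_incl _ _ H)) v = pmap G (tauE (Nat.lt_le_incl _ _ H)) u ->
  exists xi : PO G (gsum E (table2 H)),
    pmap G (ginj E (table2 H) 0) xi = v /\ pmap G (ginj E (table2 H) 1) xi = u.
Proof.
  intro Hvu.
  destruct (proj2 (HG (table2 H)) (fun k => match k with 0 => v | _ => u end))
    as [xi Hxi].
  - intros k Hk. destruct k; [exact Hvu | simpl in Hk; lia].
  - exists xi. split; [exact (Hxi 0 (Nat.le_0_l _)) | exact (Hxi 1 (le_n 1))].
Qed.

Variable PG : Pregroupoidal E.

(* For j < m, the source (resp. target) of a composite v *^{m+1}_j u is the
   composite s(v) *^m_j s(u) (resp. t(v) *^m_j t(u)): this is the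
   compatibility of nabla^{m+1}_j with sigma_{m+1}, tau_{m+1}, read in G. *)
Lemma nab_low_source m j (H : j < m) (H1 : j < S m)
    (x : PO G (gsum E (table2 H1))) (xi : PO G (gsum E (table2 H))) :
  pmap G (ginj E (table2 H) 0) xi = pmap G (sg (glob E) m) (pmap G (ginj E (table2 H1) 0) x) ->
  pmap G (ginj E (table2 H) 1) xi = pmap G (sg (glob E) m) (pmap G (ginj E (table2 H1) 1) x) ->
  pmap G (sg (glob E) m) (pmap G (nab PG H1) x) = pmap G (nab PG H) xi.
Proof.
  intros Hx0 Hx1.
  destruct (@table2_copair m j H _ (ginj E (table2 H1) 0 \o' sg (glob E) m)
                                   (ginj E (table2 H1) 1 \o' sg (glob E) m))
    as [h [Hh0 Hh1]].
  { rewrite <- !cmpA, <- (sig_ij_succ (Nat.lt_le_incl _ _ H) (Nat.lt_le_incl _ _ H1)),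
      <- (tau_ij_succ_sg H (Nat.lt_le_incl _ _ H) (Nat.lt_le_incl _ _ H1)).
    exact (table2_cocone H1). }
  assert (Hxi : xi = pmap G h x).
  { apply glue2_unique; rewrite <- pmap_cmp; [rewrite Hh0 | rewrite Hh1];
      rewrite pmap_cmp; assumption. }
  rewrite Hxi, <- !pmap_cmp, (nab_low_s PG Hh0 Hh1). reflexivity.
Qed.

Lemma nab_low_target m j (H : j < m) (H1 : j < S m)
    (x : PO G (gsum E (table2 H1))) (xi : PO G (gsum E (table2 H))) :
  pmap G (ginj E (table2 H) 0) xi = pmap G (tg (glob E) m) (pmap G (ginj E (table2 H1) 0) x) ->
  pmap G (ginj E (table2 H) 1) xi = pmap G (tg (glob E) m) (pmap G (ginj E (table2 H1) 1) x) ->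
  pmap G (tg (glob E) m) (pmap G (nab PG H1) x) = pmap G (nab PG H) xi.
Proof.
  intros Hx0 Hx1.
  destruct (@table2_copair m j H _ (ginj E (table2 H1) 0 \o' tg (glob E) m)
                                   (ginj E (table2 H1) 1 \o' tg (glob E) m))
    as [h [Hh0 Hh1]].
  { rewrite <- !cmpA, <- (sig_ij_succ_tg H (Nat.lt_le_incl _ _ H) (Nat.lt_le_incl _ _ H1)),
      <- (tau_ij_succ (Nat.lt_le_incl _ _ H) (Nat.lt_le_incl _ _ H1)).
    exact (table2_cocone H1). }
  assert (Hxi : xi = pmap G h x).
  { apply glue2_unique; rewrite <- pmap_cmp; [rewrite Hh0 | rewrite Hh1];
      rewrite pmap_cmp; assumption. }
  rewrite Hxi, <- !pmap_cmp, (nab_low_t PG Hh0 Hh1). reflexivity.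
Qed.

Lemma htpy_refl n (u : PO G (D (glob E) n)) : htpy u u.
Proof.
  exists (pmap G (kap PG n) u).
  split; rewrite <- pmap_cmp; [rewrite kap_s | rewrite kap_t]; apply pmap_id.
Qed.

Lemma htpy_sym n (u v : PO G (D (glob E) n)) : htpy u v -> htpy v u.
Proof.
  intros [a [Ha Ha']]. exists (pmap G (wi PG (Nat.lt_succ_diag_r n)) a).
  split; rewrite <- pmap_cmp; [rewrite w_top_s | rewrite w_top_t]; assumption.
Qed.

Lemma htpy_trans n (u v w : PO G (D (glob E) n)) :
  htpy u v -> htpy v w -> htpy u w.
Proof.
  intros [a [Ha Ha']] [b [Hb Hb']].
  set (H := Nat.lt_succ_diag_r n).
  destruct (@glue2 _ _ H b a) as [xi [Hxi0 Hxi1]].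
  { rewrite sig_ij_diag, tau_ij_diag, Hb, Ha'. reflexivity. }
  exists (pmap G (nab PG H) xi). split.
  - rewrite <- pmap_cmp, nab_top_s, pmap_cmp, Hxi1. exact Ha.
  - rewrite <- pmap_cmp, nab_top_t, pmap_cmp, Hxi0. exact Hb'.
Qed.

Lemma htpy_comp m (u u' v v' : PO G (D (glob E) (S m))) :
  htpy u u' -> htpy v v' ->
  pmap G (sg (glob E) m) v = pmap G (tg (glob E) m) u ->
  forall w w', is_comp PG v u w -> is_comp PG v' u' w' -> htpy w w'.
Proof.
  intros [a [Ha Ha']] [b [Hb Hb']] Hvu w w'
    [xi [Hxi0 [Hxi1 Hw]]] [xi' [Hxi0' [Hxi1' Hw']]].
  assert (H1 : m < S (S m)) by lia.
  destruct (@glue2 _ _ H1 b a) as [ks [Hks0 Hks1]].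
  { rewrite (sig_ij_succ (Nat.le_succ_diag_r m)), sig_ij_diag,
      (tau_ij_succ_sg (Nat.lt_succ_diag_r m) (Nat.le_succ_diag_r m)), tau_ij_diag,
      !pmap_cmp, Hb, Ha. exact Hvu. }
  exists (pmap G (nab PG H1) ks). split.
  - rewrite (nab_low_source (x := ks) (xi := xi)); [exact Hw | |];
      rewrite ?Hks0, ?Hks1, ?Hb, ?Ha; assumption.
  - rewrite (nab_low_target (x := ks) (xi := xi')); [exact Hw' | |];
      rewrite ?Hks0, ?Hks1, ?Hb', ?Ha'; assumption.
Qed.

End BinarySums.

Theorem lemma4 (E : GlobExt) (HC : Contractible E) (PG : Pregroupoidal E)
    (G : Presheaf (GC E)) (HG : @IsInfGroupoid E G) :
  (forall n : nat, Equivalence (@htpy E G n)) /\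
  (forall (m : nat) (u u' v v' : PO G (D (glob E) (S m))),
      @htpy E G (S m) u u' -> @htpy E G (S m) v v' ->
      pmap G (sg (glob E) m) v = pmap G (tg (glob E) m) u ->
      forall w w' : PO G (D (glob E) (S m)),
        @is_comp E PG G m v u w -> @is_comp E PG G m v' u' w' ->
        @htpy E G (S m) w w').
Proof.
  split.
  - intro n. constructor.
    + exact (htpy_refl PG (n := n)).
    + exact (htpy_sym PG (n := n)).
    + exact (htpy_trans HG PG (n := n)).
  - exact (@htpy_comp E G HG PG).
Qed.
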